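(* Let $\mu$ be an odd positive integer. Then there exists a cyclic DCA$(4,6\mu+5;6\mu+4)$ satisfying P1 and P2.
   Context: Let $(G,+)$ be an abelian group of order $n$. A difference covering array DCA$(k,\eta;n)$ over $G$ is an $\eta\times k$ matrix $Q=[q(i,j)]$ (rows indexed $0,\dots,\eta-1$, columns $0,\dots,k-1$) with entries in $G$ such that for every pair of distinct columns $j,j'$ the multiset $\{q(i,j)-q(i,j') : 0\le i\le \eta-1\}$ contains every element of $G$ at least once. It is cyclic if $G=\mathbb{Z}_n$. A DCA$(k,n+1;n)$ is taken in normalized form: all entries of its last row (row $n$) and of its last column (column $k-1$) equal $0$. Such a DCA satisfies P1 if $0$ occurs at least twice in every column, and satisfies P2 if for all distinct columns $j,j'$ with $j\neq k-1\neq j'$, the set $\{q(i,j)-q(i,j') : 0\le i\le n-1\}$ equals $G\setminus\{0\}$. *)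

From HB Require Import structures.
From mathcomp Require Import all_boot all_order all_algebra.
Set Implicit Arguments. Unset Strict Implicit. Unset Printing Implicit Defensive.
Import GRing.Theory.
Local Open Scope ring_scope.

Definition is_DCA (G : finZmodType) (eta k : nat) (Q : 'M[G]_(eta, k)) : Prop :=
  forall j j' : 'I_k, j != j' -> forall g : G, exists i : 'I_eta, Q i j - Q i j' = g.

Definition DCA_normalized (G : finZmodType) (n k : nat) (Q : 'M[G]_(n.+1, k.+1)) : Prop :=
  (forall j, Q ord_max j = 0) /\ (forall i, Q i ord_max = 0).

Definition DCA_P1 (G : finZmodType) (eta k : nat) (Q : 'M[G]_(eta, k)) : Prop :=
  forall j : 'I_k, (2 <= #|[set i : 'I_eta | Q i j == 0%R]|)%N.

Definition DCA_P2 (G : finZmodType) (n k : nat) (Q : 'M[G]_(n.+1, k.+1)) : Prop :=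
  forall j j' : 'I_k.+1, j != j' -> j != ord_max -> j' != ord_max ->
    [set Q i j - Q i j' | i in [set i : 'I_n.+1 | (i < n)%N]] = [set: G] :\ 0%R.

From HB Require Import structures.
From mathcomp Require Import all_boot all_order all_algebra.
From mathcomp Require Import zify ring.

(* Write 6mu + 4 = 2m with m = 6t + 5 odd, so that Z_(2m) is Z_2 x Z_m.  Rows
   other than the last are indexed by (e, x) in bool x Z_m.  Each of the first
   three columns has a Z_m-part affine in x with unit slope and a Z_2-part
   given by interval conditions on x.  For a column against the zero column,
   or for two of the first three columns, the Z_m-part of the difference is
   then attained at exactly two rows, (true, x) and (false, x + h) for a fixed
   shift h.  The Z_2-parts are chosen so that these two rows differ in parity,
   except over the residue 0 of two distinct columns, where both are odd.  So
   the differences of a column with the last one cover Z_(2m), and those of two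
   of the first three columns cover Z_(2m) minus 0 and never vanish. *)

Set Implicit Arguments. Unset Strict Implicit. Unset Printing Implicit Defensive.
Import GRing.Theory.

Section BorderedArray.
Local Open Scope ring_scope.
Variables (G : finZmodType) (n k : nat) (F : 'I_k -> 'I_n -> G).

Definition bordered : 'M[G]_(n.+1, k.+1) :=
  \matrix_(i, j) match unlift ord_max i, unlift ord_max j with
                 | Some r, Some c => F c r
                 | _, _ => 0
                 end.

Lemma bordered_lift r c : bordered (lift ord_max r) (lift ord_max c) = F c r.
Proof. by rewrite mxE !liftK. Qed.

Lemma bordered_last_row j : bordered ord_max j = 0.
Proof. by rewrite mxE unlift_none. Qed.

Lemma bordered_last_col i : bordered i ord_max = 0.
Proof. by rewrite mxE unlift_none; case: unlift. Qed.

Hypothesis n_gt0 : (0 < n)%N.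
Hypothesis F_onto : forall c g, exists r, F c r = g.
Hypothesis F_diff : forall c c' : 'I_k, (c < c')%N ->
  [set F c r - F c' r | r in 'I_n] = [set: G] :\ 0.

Lemma F_diff_neq c c' : c != c' -> [set F c r - F c' r | r in 'I_n] = [set: G] :\ 0.
Proof.
rewrite neq_ltn => /orP[/F_diff //|/F_diff E]; apply/setP => g.
apply/imsetP/idP => [[r _ ->]|].
  have : F c' r - F c r \in [set F c' r - F c r | r in 'I_n] by apply: imset_f.
  by rewrite E !inE !andbT -oppr_eq0 opprB.
rewrite !inE andbT -oppr_eq0 => g0.
have : - g \in [set F c' r - F c r | r in 'I_n] by rewrite E !inE g0.
by case/imsetP => r _ /(canRL (@opprK _)); rewrite opprB => ->; exists r.
Qed.

Lemma bordered_is_DCA : is_DCA bordered.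
Proof.
move=> j j'; case: (unliftP ord_max j) => [c ->|->];
  case: (unliftP ord_max j') => [c' ->|->] neq_jj' g.
- have [->|g0] := eqVneq g 0; first by exists ord_max; rewrite !bordered_last_row subr0.
  have neq_cc' : c != c' by apply: contraNneq neq_jj' => ->.
  have /imsetP[r _ ->] : g \in [set F c r - F c' r | r in 'I_n].
    by rewrite F_diff_neq // !inE g0.
  by exists (lift ord_max r); rewrite !bordered_lift.
- have [r Fr] := F_onto c g.
  by exists (lift ord_max r); rewrite bordered_lift bordered_last_col subr0.
- have [r Fr] := F_onto c' (- g).
  by exists (lift ord_max r); rewrite bordered_lift bordered_last_col sub0r Fr opprK.
- by rewrite eqxx in neq_jj'.
Qed.

Lemma bordered_normalized : DCA_normalized bordered.
Proof. by split=> [j|i]; rewrite ?bordered_last_row ?bordered_last_col. Qed.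

Lemma bordered_P1 : DCA_P1 bordered.
Proof.
move=> j; apply/card_gt1P; case: (unliftP ord_max j) => [c ->|->].
- have [r Fr] := F_onto c 0.
  exists (lift ord_max r), ord_max.
  by rewrite !inE bordered_lift Fr bordered_last_row eq_sym neq_lift.
- exists (lift ord_max (Ordinal n_gt0)), ord_max.
  by rewrite !inE !bordered_last_col eq_sym neq_lift.
Qed.

Lemma bordered_P2 : DCA_P2 bordered.
Proof.
move=> j j' + /negbTE jmax /negbTE j'max.
case: (unliftP ord_max j) jmax => [c -> _|->]; last by rewrite eqxx.
case: (unliftP ord_max j') j'max => [c' -> _|->]; last by rewrite eqxx.
move=> neq_jj'.
have neq_cc' : c != c' by apply: contraNneq neq_jj' => ->.
rewrite -(F_diff_neq neq_cc').
apply/setP => g; apply/imsetP/imsetP => -[i].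
- rewrite inE; case: (unliftP ord_max i) => [r ->|->]; last by rewrite ltnn.
  by rewrite !bordered_lift => _ ->; exists r.
- move=> _ ->; exists (lift ord_max i); last by rewrite !bordered_lift.
  by rewrite inE lift_max ltn_ord.
Qed.

Lemma bordered_DCA :
  [/\ is_DCA bordered, DCA_normalized bordered, DCA_P1 bordered & DCA_P2 bordered].
Proof.
split; [exact: bordered_is_DCA | exact: bordered_normalized |
        exact: bordered_P1 | exact: bordered_P2].
Qed.

End BorderedArray.

Section Pairing.
Local Open Scope ring_scope.
Variable Z : finZmodType.

Definition covers (p : bool -> Z -> bool) (d : bool -> Z -> Z) :=
  forall b g, exists e x, p e x = b /\ d e x = g.

Definition covers_nonzero (p : bool -> Z -> bool) (d : bool -> Z -> Z) :=
  (forall b g, b || (g != 0) -> exists e x, p e x = b /\ d e x = g) /\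
  (forall e x, d e x = 0 -> p e x).

Variables (p : bool -> Z -> bool) (d : bool -> Z -> Z) (h : Z).
Hypothesis d_inj : injective (d true).
Hypothesis d_shift : forall x, d false (x + h) = d true x.

Lemma pairing_onto g : exists x, d true x = g.
Proof. by have [dinv _ dinvK] := injF_bij d_inj; exists (dinv g). Qed.

Lemma pairing_choose x b : p false (x + h) != p true x ->
  exists e y, p e y = b /\ d e y = d true x.
Proof.
move=> p_x; have [pb|pb] := eqVneq (p true x) b; first by exists true, x.
by exists false, (x + h); rewrite d_shift; split=> //; move: p_x pb; lia.
Qed.

Lemma pairing_covers : (forall x, p false (x + h) != p true x) -> covers p d.
Proof. by move=> p_flip b g; have [x <-] := pairing_onto g; apply: pairing_choose. Qed.

Variable z : Z.
Hypotheses (d_z : d true z = 0) (p_z : p false (z + h) && p true z).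
Hypothesis p_flip : forall x, x != z -> p false (x + h) != p true x.

Lemma pairing_covers_nonzero : covers_nonzero p d.
Proof.
case/andP: p_z => p0z p1z; split=> [b g|[] x dx0].
- have [x <-] := pairing_onto g; have [->|xz] := eqVneq x z; last first.
    by move=> _; apply: pairing_choose; apply: p_flip.
  by rewrite d_z eqxx orbF => ->; exists true, z.
- by rewrite (d_inj (etrans dx0 (esym d_z))).
- have : d true (x - h) = d true z by rewrite -d_shift subrK dx0 d_z.
  by move/d_inj => xz; rewrite -(subrK h x) xz.
Qed.

End Pairing.

Section ZpArith.
Local Open Scope ring_scope.
Variable m : nat.
Hypothesis m_gt1 : (1 < m)%N.

Lemma ltn_Zp (x : 'Z_m) : (x < m)%N.
Proof. by rewrite -[m in (_ < m)%N](Zp_cast m_gt1) ltn_ord. Qed.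

Lemma Zp_val_add (z z' : 'Z_m) : nat_of_ord (z + z') = ((z + z') %% m)%N.
Proof. by rewrite -[RHS](val_Zp_nat m_gt1) natrD !natr_Zp. Qed.

Lemma Zp_val_addn (x : 'Z_m) k : (k < m)%N ->
  nat_of_ord (x + k%:R) = if (x + k < m)%N then (x + k)%N else (x + k - m)%N.
Proof.
move=> k_lt_m; rewrite Zp_val_add val_Zp_nat // (modn_small k_lt_m).
case: ltnP => [/modn_small //|m_le]; have := ltn_Zp x.
by rewrite -[in LHS](subnK m_le) modnDr => x_lt; rewrite modn_small //; lia.
Qed.

Lemma Zp_natr_small k : (k < m)%N -> nat_of_ord (k%:R : 'Z_m) = k.
Proof. by move=> k_lt_m; rewrite val_Zp_nat // modn_small. Qed.

Lemma Zp_eq_natr (x : 'Z_m) k : (k < m)%N -> (x == k%:R) = (x == k :> nat).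
Proof. by move=> k_lt_m; rewrite -(inj_eq val_inj) /= Zp_natr_small. Qed.

Lemma Zp_natr_congr a b q : (a = b + q * m)%N -> a%:R = b%:R :> 'Z_m.
Proof. by move=> ->; rewrite natrD natrM pchar_Zp // mulr0 addr0. Qed.

End ZpArith.

Section CRT.
Local Open Scope ring_scope.
Variables (m N : nat).
Hypotheses (m_gt1 : (1 < m)%N) (m_odd : odd m) (N_2m : N = (2 * m)%N).

Lemma Z2m_natr_eq (a b : nat) :
  (a%:R = b%:R :> 'Z_N) <-> (a = b %[mod 2] /\ a = b %[mod m])%N.
Proof.
have N_gt1 : (1 < N)%N by rewrite N_2m; lia.
have co2m : coprime 2 m by rewrite coprime2n m_odd.
split=> [|[E2 Em]].
  move/(congr1 val); rewrite /= !val_Zp_nat // N_2m => /eqP.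
  by rewrite chinese_remainder // => /andP[/eqP-> /eqP->].
apply: val_inj; rewrite /= !val_Zp_nat // N_2m; apply/eqP.
by rewrite chinese_remainder // E2 Em !eqxx.
Qed.

(* [m * b + (m + 1) * z] is [b] mod 2 and [z] mod m. *)
Definition crt (b : bool) (z : 'Z_m) : 'Z_N := (m * b + m.+1 * z)%:R.

Lemma crt_nat_mod2 (b : bool) (x : nat) : (m * b + m.+1 * x = b %[mod 2])%N.
Proof. by rewrite !modn2 oddD !oddM /= m_odd /= addbF oddb. Qed.

Lemma crt_nat_modm (b : bool) (x : nat) : (m * b + m.+1 * x = x %[mod m])%N.
Proof. by rewrite mulSn addnCA -mulnDr addnC mulnC modnMDl. Qed.

Lemma crtD b b' z z' : crt b z + crt b' z' = crt (b (+) b') (z + z').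
Proof.
rewrite /crt -natrD; apply/Z2m_natr_eq; split.
  by rewrite -modnDm !crt_nat_mod2 modnDm !modn2 oddD /=; case: b; case: b'.
by rewrite -modnDm !crt_nat_modm modnDm Zp_val_add // modn_mod.
Qed.

Lemma crtB b b' z z' : crt b z - crt b' z' = crt (b (+) b') (z - z').
Proof. by apply/eqP; rewrite subr_eq crtD addbK subrK. Qed.

Lemma crt_inj b b' z z' : crt b z = crt b' z' -> b = b' /\ z = z'.
Proof.
case/Z2m_natr_eq; rewrite !crt_nat_mod2 !crt_nat_modm => E2 Em.
split; first by move: E2; case: b; case: b'.
by apply: val_inj => /=; rewrite -[z]natr_Zp -[z']natr_Zp !val_Zp_nat.
Qed.

Lemma crt_onto g : exists b z, crt b z = g.
Proof.
exists (odd g), (g : nat)%:R; rewrite -[RHS]natr_Zp; apply/Z2m_natr_eq.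
by rewrite crt_nat_mod2 crt_nat_modm val_Zp_nat // modn_mod !modn2 oddb.
Qed.

Lemma crt_eq0 b z : (crt b z == 0) = ~~ b && (z == 0).
Proof.
have crt00 : crt false 0 = 0 by rewrite /crt !muln0.
apply/eqP/andP => [|[/negbTE-> /eqP->]] //.
by rewrite -crt00 => /crt_inj[-> ->].
Qed.

Definition row_bit (r : 'I_N) : bool := (m <= r)%N.
Definition row_res (r : 'I_N) : 'Z_m := (r : nat)%:R.

Lemma row_onto e (x : 'Z_m) : exists r : 'I_N, row_bit r = e /\ row_res r = x.
Proof.
have x_lt_m := ltn_Zp m_gt1 x.
have r_lt_N : (e * m + x < N)%N by rewrite N_2m; lia.
exists (Ordinal r_lt_N); split; first by rewrite /row_bit /=; lia.
by rewrite /row_res /= (@Zp_natr_congr _ m_gt1 _ x e) ?natr_Zp //; lia.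
Qed.

Section CrtRows.
Variables (P : bool -> 'Z_m -> bool) (D : bool -> 'Z_m -> 'Z_m).
Let crt_row (r : 'I_N) := crt (P (row_bit r) (row_res r)) (D (row_bit r) (row_res r)).

Lemma crt_rows_onto : covers P D -> forall g, exists r, crt_row r = g.
Proof.
move=> PD g; have [b [z <-]] := crt_onto g.
have [e [x [<- <-]]] := PD b z; have [r [<- <-]] := row_onto e x.
by exists r.
Qed.

Lemma crt_rows_nonzero : covers_nonzero P D -> [set crt_row r | r in 'I_N] = [set: 'Z_N] :\ 0.
Proof.
case=> PD DP; apply/setP => g; rewrite !inE andbT; apply/imsetP/idP => [[r _ ->]|g0].
  rewrite /crt_row crt_eq0 negb_and negbK.
  by have [/DP ->|D0] := eqVneq (D (row_bit r) (row_res r)) 0; rewrite ?D0 ?orbT.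
have [b [z bz]] := crt_onto g; move: g0; rewrite -bz crt_eq0 negb_and negbK => bz0.
have [e [x [<- <-]]] := PD b z bz0; have [r [<- <-]] := row_onto e x.
by exists r.
Qed.

End CrtRows.
End CRT.

Lemma mulrn_inj (R : pzRingType) n (u : R) :
  (u *+ n = 1)%R -> injective (fun x : R => (x *+ n)%R).
Proof. by move=> un x y xy; rewrite -[x]mulr1 -[y]mulr1 -un !mulrnAr -!mulrnAl xy. Qed.

Section Residues.
Local Open Scope ring_scope.
Variable R : comRingType.

Definition col_res (c : nat) (e : bool) (x : R) : R :=
  match c with 0 => x | 1 => x *+ 2 + e%:R | _ => 1 - e%:R - x end.

Definition pair_res (c c' : nat) (e : bool) (x : R) : R := col_res c e x - col_res c' e x.

Lemma col_res1_shift (h x : R) : h *+ 2 = 1 -> col_res 1 false (x + h) = col_res 1 true x.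
Proof. by move=> h2; rewrite /= mulrnDl h2 addr0. Qed.

Lemma col_res2_shift (x : R) : col_res 2 false (x + 1) = col_res 2 true x.
Proof. by rewrite /=; ring. Qed.

Lemma pair_res01E (x : R) : pair_res 0 1 true x = - (x + 1).
Proof. by rewrite /pair_res /=; ring. Qed.

Lemma pair_res01_shift (x : R) : pair_res 0 1 false (x + 1) = pair_res 0 1 true x.
Proof. by rewrite /pair_res /=; ring. Qed.

Lemma pair_res02E (x : R) : pair_res 0 2 true x = x *+ 2.
Proof. by rewrite /pair_res /=; ring. Qed.

Lemma pair_res02_shift (h x : R) : h *+ 2 = 1 ->
  pair_res 0 2 false (x + h) = pair_res 0 2 true x.
Proof. by move=> h2; rewrite /pair_res /=; ring: h2. Qed.

Lemma pair_res12E (x : R) : pair_res 1 2 true x = x *+ 3 + 1.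
Proof. by rewrite /pair_res /=; ring. Qed.

Lemma pair_res12_shift (h x : R) : h *+ 3 = 2 ->
  pair_res 1 2 false (x + h) = pair_res 1 2 true x.
Proof. by move=> h3; rewrite /pair_res /=; ring: h3. Qed.

End Residues.

Section Construction.
Variable t : nat.
Local Notation s := t.+1.
Local Notation m := (6 * t + 5).

Lemma m_gt1 : 1 < m. Proof. lia. Qed.

Definition block0 (x : 'Z_m) := (x < s) || (2 * s <= x < 3 * s) || (4 * s <= x < 5 * s).

Definition bit0 (e : bool) (x : 'Z_m) := e (+) block0 x.

Definition bit1 (e : bool) (x : 'Z_m) :=
  if e then (x < 3 * s) || (x == 4 * s - 1 :> nat) || (x == 5 * s - 1 :> nat)
  else (x < 3 * s) && (x != 0 :> nat) && (x != s :> nat) && (x != 2 * s :> nat).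

Definition bit2 (e : bool) (x : 'Z_m) :=
  if e then (x < s) || (2 * s <= x < 3 * s - 1) || (3 * s <= x < 4 * s - 1) || (5 * s - 1 <= x)
  else (s < x <= 2 * s) || (x == 3 * s :> nat) || (4 * s <= x < 5 * s).

Definition col_bit (c : nat) : bool -> 'Z_m -> bool :=
  match c with 0 => bit0 | 1 => bit1 | _ => bit2 end.

Definition pair_bit (c c' : nat) (e : bool) (x : 'Z_m) := col_bit c e x (+) col_bit c' e x.

Local Open Scope ring_scope.

Lemma Zm_half : (3 * t + 3)%:R *+ 2 = 1 :> 'Z_m.
Proof. by rewrite -mulrnA (@Zp_natr_congr _ m_gt1 _ 1 1) //; lia. Qed.

Lemma Zm_third : (2 * t + 2)%:R *+ 3 = 1 :> 'Z_m.
Proof. by rewrite -mulrnA (@Zp_natr_congr _ m_gt1 _ 1 1) //; lia. Qed.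

Lemma Zm_shift12 : (4 * t + 4)%:R *+ 3 = 2 :> 'Z_m.
Proof. by rewrite -mulrnA (@Zp_natr_congr _ m_gt1 _ 2 2) //; lia. Qed.

Lemma Zm_zero01 : (6 * t + 4)%:R + 1 = 0 :> 'Z_m.
Proof. by rewrite natr1 (@Zp_natr_congr _ m_gt1 _ 0 1) //; lia. Qed.

Lemma Zm_zero12 : (4 * t + 3)%:R *+ 3 + 1 = 0 :> 'Z_m.
Proof. by rewrite -mulrnA natr1 (@Zp_natr_congr _ m_gt1 _ 0 2) //; lia. Qed.

(* Plain [lia] blows up on these boolean combinations: split on the atoms first. *)
Ltac decide_bits :=
  repeat match goal with
  | |- context [if _ then _ else _] => case: ifP => ?
  | |- context [leq ?a ?b] =>
      first [ rewrite (_ : (a <= b)%N = true); last by lia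
            | rewrite (_ : (a <= b)%N = false); last by lia
            | case: (leqP a b) => ? ]
  | |- context [@eq_op nat ?a ?b] =>
      first [ rewrite (_ : (a == b :> nat) = true); last by lia
            | rewrite (_ : (a == b :> nat) = false); last by lia
            | case: (a =P b) => ? ]
  end; solve [done | lia].

Lemma bit1_flip (x : 'Z_m) : bit1 false (x + (3 * t + 3)%:R) != bit1 true x.
Proof.
have := ltn_Zp m_gt1 x; rewrite /bit1 Zp_val_addn ?m_gt1 //; last lia.
by move=> x_lt_m; decide_bits.
Qed.

Lemma bit2_flip (x : 'Z_m) : bit2 false (x + 1) != bit2 true x.
Proof.
have := ltn_Zp m_gt1 x; rewrite /bit2 -[1]mulr1n Zp_val_addn ?m_gt1 //.
by move=> x_lt_m; decide_bits.
Qed.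

Lemma pair01_flip (x : 'Z_m) : x != (6 * t + 4)%:R ->
  bit0 false (x + 1) (+) bit1 false (x + 1) != bit0 true x (+) bit1 true x.
Proof.
have := ltn_Zp m_gt1 x; rewrite /bit0 /block0 /bit1 Zp_eq_natr ?m_gt1 //; last lia.
rewrite -[1]mulr1n Zp_val_addn ?m_gt1 //.
by move=> x_lt_m x_neq; decide_bits.
Qed.

Lemma pair01_zero (z := (6 * t + 4)%:R : 'Z_m) :
  (bit0 false (z + 1) (+) bit1 false (z + 1)) && (bit0 true z (+) bit1 true z).
Proof. by rewrite /z Zm_zero01 /bit0 /block0 /bit1 Zp_natr_small ?m_gt1 //=; decide_bits. Qed.

Lemma pair02_flip (x : 'Z_m) : x != 0 ->
  bit0 false (x + (3 * t + 3)%:R) (+) bit2 false (x + (3 * t + 3)%:R)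
  != bit0 true x (+) bit2 true x.
Proof.
have := ltn_Zp m_gt1 x; rewrite /bit0 /block0 /bit2 Zp_val_addn ?m_gt1 //; last lia.
by rewrite -(inj_eq val_inj) /= => x_lt_m x_neq; decide_bits.
Qed.

Lemma pair02_zero (h := (3 * t + 3)%:R : 'Z_m) :
  (bit0 false (0 + h) (+) bit2 false (0 + h)) && (bit0 true 0 (+) bit2 true 0).
Proof. by rewrite /h add0r /bit0 /block0 /bit2 Zp_natr_small ?m_gt1 //=; decide_bits. Qed.

Lemma pair12_flip (x : 'Z_m) : x != (4 * t + 3)%:R ->
  bit1 false (x + (4 * t + 4)%:R) (+) bit2 false (x + (4 * t + 4)%:R)
  != bit1 true x (+) bit2 true x.
Proof.
have := ltn_Zp m_gt1 x; rewrite /bit1 /bit2 Zp_eq_natr ?m_gt1 //; last lia.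
rewrite Zp_val_addn ?m_gt1 //; last lia.
by move=> x_lt_m x_neq; decide_bits.
Qed.

Lemma pair12_zero (z := (4 * t + 3)%:R : 'Z_m) (h := (4 * t + 4)%:R : 'Z_m) :
  (bit1 false (z + h) (+) bit2 false (z + h)) && (bit1 true z (+) bit2 true z).
Proof.
have z_lt_m : (4 * t + 3 < m)%N by lia.
have h_lt_m : (4 * t + 4 < m)%N by lia.
by rewrite /z /h /bit1 /bit2 Zp_val_addn ?Zp_natr_small ?m_gt1 //; decide_bits.
Qed.

Lemma col_covers (c : nat) : (c < 3)%N -> covers (col_bit c) (col_res c).
Proof.
case: c => [|[|[|//]]] _.
- apply: (@pairing_covers _ _ _ 0) => [x y //|x|x]; first by rewrite addr0.
  by rewrite addr0 /= /bit0; case: block0.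
- apply: (@pairing_covers _ _ _ (3 * t + 3)%:R) => [x y /addIr|x|x].
  + by apply: mulrn_inj; apply: Zm_half.
  + exact: col_res1_shift Zm_half.
  + exact: bit1_flip.
- apply: (@pairing_covers _ _ _ 1) => [x y /addrI/oppr_inj //|x|x].
  + exact: col_res2_shift.
  + exact: bit2_flip.
Qed.

Lemma pair_covers (c c' : nat) : (c < c' < 3)%N ->
  covers_nonzero (pair_bit c c') (pair_res c c').
Proof.
case: c => [|[|[|c]]]; case: c' => [|[|[|c']]]; rewrite /= ?andbF // => _.
- apply: (@pairing_covers_nonzero _ _ _ 1 _ _ (6 * t + 4)%:R).
  + by move=> x y; rewrite !pair_res01E => /oppr_inj/addIr.
  + exact: pair_res01_shift.
  + by rewrite pair_res01E Zm_zero01 oppr0.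
  + exact: pair01_zero.
  + exact: pair01_flip.
- apply: (@pairing_covers_nonzero _ _ _ (3 * t + 3)%:R _ _ 0).
  + by move=> x y; rewrite !pair_res02E; apply: mulrn_inj; apply: Zm_half.
  + by move=> x; apply: pair_res02_shift Zm_half.
  + by rewrite pair_res02E mul0rn.
  + exact: pair02_zero.
  + exact: pair02_flip.
- apply: (@pairing_covers_nonzero _ _ _ (4 * t + 4)%:R _ _ (4 * t + 3)%:R).
  + by move=> x y; rewrite !pair_res12E => /addIr; apply: mulrn_inj; apply: Zm_third.
  + by move=> x; apply: pair_res12_shift Zm_shift12.
  + by rewrite pair_res12E Zm_zero12.
  + exact: pair12_zero.
  + exact: pair12_flip.
Qed.

End Construction.

Section Entries.
Local Open Scope ring_scope.
Variables (t N : nat).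
Local Notation m := (6 * t + 5).
Hypothesis N_2m : N = (2 * m)%N.

Let m_odd : odd m. Proof. by rewrite oddD oddM. Qed.

Definition entry (c : 'I_3) (r : 'I_N) : 'Z_N :=
  crt N (col_bit c (row_bit m r) (row_res m r)) (col_res c (row_bit m r) (row_res m r)).

Lemma entry_onto c g : exists r, entry c r = g.
Proof. by have := crt_rows_onto (m_gt1 t) m_odd N_2m (col_covers (ltn_ord c)) g. Qed.

Lemma entry_diff (c c' : 'I_3) : (c < c')%N ->
  [set entry c r - entry c' r | r in 'I_N] = [set: 'Z_N] :\ 0.
Proof.
move=> lt_cc'; rewrite (eq_imset _ (fun r => crtB (m_gt1 t) m_odd N_2m _ _ _ _)).
have cc'3 : (c < c' < 3)%N by rewrite lt_cc' ltn_ord.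
by have := crt_rows_nonzero (m_gt1 t) m_odd N_2m (pair_covers t cc'3).
Qed.

End Entries.

Local Open Scope ring_scope.

Theorem mainTheorem4 (mu : nat) (Hmu : odd mu) :
  exists Q : 'M['Z_(6 * mu + 4)]_((6 * mu + 4).+1, 3.+1),
    [/\ is_DCA Q, DCA_normalized Q, DCA_P1 Q & DCA_P2 Q].
Proof.
have N_2m : (6 * mu + 4 = 2 * (6 * mu./2 + 5))%N.
  by have := odd_double_half mu; rewrite Hmu; lia.
exists (bordered (@entry mu./2 (6 * mu + 4)%N)); apply: bordered_DCA => [|c g|c c' lt_cc'].
- lia.
- exact: entry_onto.
- exact: entry_diff.
Qed.
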